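(* There exists a universal constant $C$ such that for every integer $k\ge C$ and every 3-regular graph $G$, $\mathrm{Opt}(G)<\frac{332}{331}\,\mathrm{MaxCut}(G)$.
   Context: For a 3-regular graph $G$ on $n$ vertices with adjacency matrix $A$, let $Q_G=\frac12\big(I-\frac13A\big)$, $\mathrm{MaxCut}(G)=\max_{x\in\{\pm1/\sqrt n\}^n}x^TQ_Gx$, $p_G(x)=(x^TQ_Gx)\prod_{i=1}^n(nx_i^2)^k$ for $x\in\mathbb{R}^n$ (with $k$ a positive integer), and $\mathrm{Opt}(G)=\max_{x\in\mathbb{R}^n,\ \|x\|_2=1}p_G(x)$. *)

From HB Require Import structures.
From mathcomp Require Import all_boot all_order all_algebra.
From mathcomp Require Import all_classical all_reals.
Set Implicit Arguments. Unset Strict Implicit. Unset Printing Implicit Defensive.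
Import Order.TTheory GRing.Theory Num.Theory.
Local Open Scope ring_scope.
Local Open Scope classical_set_scope.

Definition simple_graph (n : nat) (e : rel 'I_n) : Prop :=
  (forall i j, e i j = e j i) /\ (forall i, ~~ e i i).

Definition three_regular (n : nat) (e : rel 'I_n) : Prop :=
  simple_graph e /\ forall i : 'I_n, #|[set j | e i j]| = 3%N.

Definition adjmx (R : realType) (n : nat) (e : rel 'I_n) : 'M[R]_n :=
  \matrix_(i, j) (e i j)%:R.

Definition QG (R : realType) (n : nat) (e : rel 'I_n) : 'M[R]_n :=
  2^-1 *: (1%:M - 3^-1 *: adjmx R e).

Definition qform (R : realType) (n : nat) (M : 'M[R]_n) (x : 'cV[R]_n) : R :=
  (x^T *m M *m x) 0 0.

Definition MaxCut (R : realType) (n : nat) (e : rel 'I_n) : R :=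
  sup [set qform (QG R e) x | x in
        [set x : 'cV[R]_n | forall i, x i 0 = (Num.sqrt (n%:R))^-1
                                   \/ x i 0 = - (Num.sqrt (n%:R))^-1]].

Definition pG (R : realType) (n : nat) (k : nat) (e : rel 'I_n) (x : 'cV[R]_n) : R :=
  qform (QG R e) x * \prod_(i < n) (n%:R * x i 0 ^+ 2) ^+ k.

(* Opt(G) = max over the unit sphere (a maximum, attained by compactness). *)
Definition Opt (R : realType) (n : nat) (k : nat) (e : rel 'I_n) : R :=
  sup [set pG k e x | x in [set x : 'cV[R]_n | \sum_(i < n) x i 0 ^+ 2 = 1]].

From HB Require Import structures.
From mathcomp Require Import all_boot all_order all_algebra.
From mathcomp Require Import all_classical all_reals.
From mathcomp Require Import sequences exp.
From mathcomp Require Import ring lra.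
Import Order.TTheory GRing.Theory Num.Theory.
Set Implicit Arguments. Unset Strict Implicit. Unset Printing Implicit Defensive.
Local Open Scope ring_scope.

(* For a 3-regular graph, write the Max-Cut form as
     cutform u = |u|^2 / 2 - <u, A u> / 6,
   so that MaxCut(G) is its maximum over the cut vectors u_i = +-1/sqrt n.
   1. Regularity gives |<u, A v>| <= 3 (c |u|^2 + |v|^2 / c) / 2 for every
      c > 0; hence 0 <= cutform u <= |u|^2, and cutform is stable under small
      perturbations of its argument.
   2. Averaging cutform over all 2^n cut vectors gives MaxCut(G) >= 1/2.
   3. For a unit vector u, let z be the cut vector with the signs of u and
      t = |u - z|^2.  Since f^2 <= exp (2 (f - 1)), the weight
      prod_i (n u_i^2)^k is at most exp (- k n t).
   4. If t <= c^2 then p_G(u) <= cutform u <= MaxCut(G) + 2c + c^2 by (1);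
      otherwise, for k >= 1/c^2, the weight is at most exp(-1) <= 1/2, so
      p_G(u) <= 1/2 <= MaxCut(G).  Thus Opt(G) <= MaxCut(G) + 2c + c^2.
   With c = 1/4096 and MaxCut(G) >= 1/2 this is below 332/331 MaxCut(G). *)

Lemma abs_mul_le_amgm (R : realFieldType) (c u v : R) : 0 < c ->
  `|u * v| <= (c * u ^+ 2 + c^-1 * v ^+ 2) / 2.
Proof.
move=> c_gt0; rewrite normrM -[u ^+ 2]real_normK ?num_real //.
rewrite -[v ^+ 2]real_normK ?num_real //.
have cVc : c * c^-1 = 1 by rewrite mulfV ?gt_eqF.
have : 0 <= c^-1 * (c * `|u| - `|v|) ^+ 2.
  by rewrite mulr_ge0 ?sqr_ge0 // invr_ge0 ltW.
have -> : c^-1 * (c * `|u| - `|v|) ^+ 2 =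
    (c * c^-1) * c * `|u| ^+ 2 - 2 * (c * c^-1) * `|u| * `|v| + c^-1 * `|v| ^+ 2.
  by ring.
rewrite cVc; lra.
Qed.

Section VectorForms.
Variables (R : realFieldType) (n : nat).
Implicit Types (u v w : 'I_n -> R).

Definition sqnorm u : R := \sum_i u i ^+ 2.
Definition dotp u v : R := \sum_i u i * v i.

Lemma sqnorm_ge0 u : 0 <= sqnorm u.
Proof. by apply: sumr_ge0 => i _; apply: sqr_ge0. Qed.

Lemma dotp_le_amgm (c : R) u v : 0 < c ->
  `|dotp u v| <= (c * sqnorm u + c^-1 * sqnorm v) / 2.
Proof.
move=> c_gt0; apply: (le_trans (ler_norm_sum _ _ _)).
rewrite /sqnorm !mulr_sumr -big_split /= big_distrl /=.
by apply: ler_sum => i _; apply: abs_mul_le_amgm.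
Qed.

End VectorForms.

Section GraphForms.
Variables (R : realFieldType) (n : nat) (e : rel 'I_n).
Implicit Types (u v w : 'I_n -> R).

Definition adj (i j : 'I_n) : R := (e i j)%:R.

Definition bilin u v : R := \sum_i \sum_j adj i j * u i * v j.

Definition cutform u : R := 2^-1 * sqnorm u - 6^-1 * bilin u u.

Lemma adj_ge0 i j : 0 <= adj i j.
Proof. by rewrite ler0n. Qed.

Lemma cutform_add u w : cutform (fun i => u i + w i) =
  cutform u + cutform w + dotp u w - 6^-1 * (bilin u w + bilin w u).
Proof.
rewrite /cutform /sqnorm /bilin /dotp.
have -> : \sum_i \sum_j adj i j * (u i + w i) * (u j + w j) =
    \sum_i \sum_j adj i j * u i * u j + \sum_i \sum_j adj i j * w i * w j +
    (\sum_i \sum_j adj i j * u i * w j + \sum_i \sum_j adj i j * w i * u j).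
  rewrite -!big_split /=; apply: eq_bigr => i _; rewrite -!big_split /=.
  by apply: eq_bigr => j _; ring.
under eq_bigr => i _ do rewrite sqrrD -mulr_natl.
by rewrite !big_split /= -mulr_sumr; field.
Qed.

Section Regular.
Variable d : nat.
Hypothesis e_sym : forall i j, e i j = e j i.
Hypothesis e_deg : forall i, #|e i| = d.

Lemma adj_rowsum i : \sum_j adj i j = d%:R.
Proof.
rewrite /adj -natr_sum -(e_deg i) -sum1_card; congr (_%:R).
by rewrite [RHS]big_mkcond; apply: eq_bigr => j _; rewrite unfold_in; case: (e i j).
Qed.

Lemma adj_colsum j : \sum_i adj i j = d%:R.
Proof. by rewrite -(adj_rowsum j); apply: eq_bigr => i _; rewrite /adj e_sym. Qed.

Lemma bilin_le_amgm (c : R) u v : 0 < c ->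
  `|bilin u v| <= d%:R * (c * sqnorm u + c^-1 * sqnorm v) / 2.
Proof.
move=> c_gt0; apply: (le_trans (ler_norm_sum _ _ _)).
apply: (@le_trans _ _ (\sum_i \sum_j
    ((c / 2) * (u i ^+ 2 * adj i j) + (c^-1 / 2) * (v j ^+ 2 * adj i j)))).
  apply: ler_sum => i _; apply: (le_trans (ler_norm_sum _ _ _)).
  apply: ler_sum => j _; rewrite -mulrA normrM ger0_norm ?adj_ge0 //.
  have -> : c / 2 * (u i ^+ 2 * adj i j) + c^-1 / 2 * (v j ^+ 2 * adj i j) =
      adj i j * ((c * u i ^+ 2 + c^-1 * v j ^+ 2) / 2) by ring.
  by apply: ler_wpM2l; [apply: adj_ge0 | apply: abs_mul_le_amgm].
have -> : d%:R * (c * sqnorm u + c^-1 * sqnorm v) / 2 =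
    c / 2 * sqnorm u * d%:R + c^-1 / 2 * sqnorm v * d%:R by ring.
under eq_bigr => i _ do rewrite big_split /=.
rewrite big_split /= le_eqVlt; apply/predU1l; congr (_ + _).
  rewrite /sqnorm mulr_sumr big_distrl /=; apply: eq_bigr => i _.
  by rewrite -!mulr_sumr adj_rowsum mulrA.
rewrite exchange_big /sqnorm mulr_sumr big_distrl /=; apply: eq_bigr => j _.
by rewrite -!mulr_sumr adj_colsum mulrA.
Qed.

End Regular.

Section Cubic.
Hypothesis e_sym : forall i j, e i j = e j i.
Hypothesis e_deg3 : forall i, #|e i| = 3%N.

Lemma bilin_self_le u : `|bilin u u| <= 3 * sqnorm u.
Proof.
have := bilin_le_amgm e_sym e_deg3 u u ltr01; rewrite invr1 !mul1r.
by have -> : 3 * (sqnorm u + sqnorm u) / 2 = 3 * sqnorm u by field.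
Qed.

Lemma cutform_ge0 u : 0 <= cutform u.
Proof. by have := bilin_self_le u; rewrite /cutform ler_norml => /andP[_ ?]; lra. Qed.

Lemma cutform_le_sqnorm u : cutform u <= sqnorm u.
Proof.
have := sqnorm_ge0 u; have := bilin_self_le u.
by rewrite /cutform ler_norml => /andP[? _]; lra.
Qed.

Lemma cutform_perturb (c : R) u w : 0 < c ->
  cutform (fun i => u i + w i) <=
  cutform u + sqnorm w + c * sqnorm u + c^-1 * sqnorm w.
Proof.
move=> c_gt0; rewrite cutform_add.
have cV_gt0 : 0 < c^-1 by rewrite invr_gt0.
have := dotp_le_amgm u w c_gt0; have := bilin_le_amgm e_sym e_deg3 u w c_gt0.
have := bilin_le_amgm e_sym e_deg3 w u cV_gt0; have := cutform_le_sqnorm w.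
rewrite invrK !ler_norml => ? /andP[? _] /andP[? _] /andP[_ ?]; lra.
Qed.

End Cubic.

Section SignAverage.
Hypothesis e_irr : forall i, ~~ e i i.

Definition sgn (b : bool) : R := if b then 1 else -1.

Lemma sgn_sqr b : sgn b ^+ 2 = 1.
Proof. by case: b; rewrite /sgn ?sqrrN expr1n. Qed.

Definition flip (i : 'I_n) (s : {ffun 'I_n -> bool}) : {ffun 'I_n -> bool} :=
  [ffun l => if l == i then ~~ s l else s l].

Lemma flipK i : involutive (flip i).
Proof. by move=> s; apply/ffunP => l; rewrite !ffunE; case: (l == i); rewrite ?negbK. Qed.

Lemma sgn_corr_sum (i j : 'I_n) : i != j ->
  \sum_(s : {ffun 'I_n -> bool}) sgn (s i) * sgn (s j) = 0.
Proof.
move=> ij; have ji : (j == i) = false by rewrite eq_sym; apply/negbTE.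
set S := (X in X = 0); suff : S = - S by lra.
rewrite /S {1}(reindex_inj (inv_inj (flipK i))) /= -sumrN.
apply: eq_bigr => s _; rewrite !ffunE eqxx ji.
by case: (s i); case: (s j); rewrite /sgn /= ?mul1r ?mulN1r ?opprK ?mulr1.
Qed.

Lemma bilin_sgn_avg (c : R) :
  \sum_(s : {ffun 'I_n -> bool})
    bilin (fun i => sgn (s i) * c) (fun i => sgn (s i) * c) = 0.
Proof.
rewrite /bilin exchange_big /=; apply: big1 => i _.
rewrite exchange_big /=; apply: big1 => j _.
have corr (s : {ffun 'I_n -> bool}) : adj i j * (sgn (s i) * c) * (sgn (s j) * c) =
    adj i j * c ^+ 2 * (sgn (s i) * sgn (s j)) by ring.
rewrite (eq_bigr _ (fun s _ => corr s)) -mulr_sumr.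
have [<-|ij] := eqVneq i j; last by rewrite sgn_corr_sum ?mulr0.
by rewrite /adj (negbTE (e_irr i)) !mul0r.
Qed.

End SignAverage.
End GraphForms.

Lemma three_regular_deg (n : nat) (e : rel 'I_n) :
  three_regular e -> forall i, #|e i| = 3%N.
Proof. by case=> _ h i; rewrite -(h i); apply: eq_card => j; apply/idP/idP; rewrite in_setE. Qed.

Lemma qform_QG (R : realType) (n : nat) (e : rel 'I_n) (x : 'cV[R]_n) :
  qform (QG R e) x = cutform e (fun i => x i 0).
Proof.
rewrite /qform /QG /cutform /sqnorm /bilin.
rewrite -scalemxAr -scalemxAl mulmxBr mulmxBl mulmx1 -scalemxAr -scalemxAl.
rewrite !mxE mulrBr mulrA -invfM -natrM /=; congr (_ - _).
  by congr (_ * _); apply: eq_bigr => i _; rewrite !mxE expr2.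
congr (_ * _); rewrite exchange_big /=; apply: eq_bigr => j _.
rewrite !mxE big_distrl /=; apply: eq_bigr => i _.
by rewrite !mxE /adj [x i 0 * _]mulrC.
Qed.

Definition weight (R : realFieldType) (n k : nat) (u : 'I_n -> R) : R :=
  \prod_i (n%:R * u i ^+ 2) ^+ k.

Lemma pG_cutform (R : realType) (n k : nat) (e : rel 'I_n) (x : 'cV[R]_n) :
  pG k e x = cutform e (fun i => x i 0) * weight k (fun i => x i 0).
Proof. by rewrite /pG qform_QG. Qed.

(* From f <= exp (f - 1): each factor of the weight is exponentially small. *)
Lemma sqr_pow_le_expR (R : realType) (f : R) (k : nat) : 0 <= f ->
  (f ^+ 2) ^+ k <= expR (k%:R * (2 * (f - 1))).
Proof.
move=> f_ge0; have f_le : f <= expR (f - 1).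
  by have := expR_ge1Dx (f - 1); rewrite addrC subrK.
rewrite expRM_natl mulrC expRM_natr.
by rewrite lerXn2r ?nnegrE ?exprn_ge0 ?expR_ge0 // lerXn2r ?nnegrE ?expR_ge0.
Qed.

(* exp (- y) <= 1 / (1 + y) <= 1/2 for y >= 1. *)
Lemma expRN_le_half (R : realType) (y : R) : 1 <= y -> expR (- y) <= 2^-1.
Proof.
move=> y_ge1; have := expR_ge1Dx y; have := expRxMexpNx_1 y.
have := expR_gt0 (- y); nra.
Qed.

Section MaxCutBounds.
Variables (R : realType) (n : nat) (e : rel 'I_n).
Hypothesis e_reg : three_regular e.
Hypothesis n_gt0 : (0 < n)%N.

Let e_sym : forall i j, e i j = e j i := e_reg.1.1.
Let e_irr : forall i, ~~ e i i := e_reg.1.2.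
Let e_deg3 : forall i, #|e i| = 3%N := three_regular_deg e_reg.
Implicit Types (u : 'I_n -> R) (s : 'I_n -> bool).

Definition cutr : R := (Num.sqrt (n%:R : R))^-1.

Lemma sqrtn_gt0 : 0 < Num.sqrt (n%:R : R).
Proof. by rewrite sqrtr_gt0 ltr0n. Qed.

Lemma n_cutr_sqr : n%:R * cutr ^+ 2 = 1.
Proof. by rewrite /cutr exprVn sqr_sqrtr ?ler0n // mulfV // pnatr_eq0 -lt0n. Qed.

Lemma n_cutr : n%:R * cutr = Num.sqrt (n%:R : R).
Proof.
by rewrite /cutr -{1}(sqr_sqrtr (ler0n R n)) expr2 mulfK ?gt_eqF ?sqrtn_gt0.
Qed.

Lemma sqnorm_cutr u : (forall i, u i ^+ 2 = cutr ^+ 2) -> sqnorm u = 1.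
Proof.
move=> u_sqr; rewrite /sqnorm (eq_bigr _ (fun i _ => u_sqr i)).
by rewrite sumr_const card_ord -mulr_natl n_cutr_sqr.
Qed.

Definition cutvec (s : 'I_n -> bool) (i : 'I_n) : R := sgn R (s i) * cutr.

Lemma sqnorm_cutvec s : sqnorm (cutvec s) = 1.
Proof. by apply: sqnorm_cutr => i; rewrite exprMn sgn_sqr mul1r. Qed.

Definition cutset : set 'cV[R]_n :=
  [set x | forall i, x i 0 = cutr \/ x i 0 = - cutr]%classic.

Lemma cutset_col s : cutset (\col_i cutvec s i).
Proof. by move=> i; rewrite mxE /cutvec; case: (s i); [left|right]; rewrite ?mul1r ?mulN1r. Qed.

Lemma col_cutvec s : (fun i => (\col_j cutvec s j) i 0) = cutvec s.
Proof. by apply/funext => i; rewrite mxE. Qed.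

(* Cut values are bounded by 1, so MaxCut(G) is a genuine supremum. *)
Lemma MaxCut_has_sup : has_sup [set qform (QG R e) x | x in cutset]%classic.
Proof.
split; first by exists (qform (QG R e) (\col_i cutvec xpredT i)),
  (\col_i cutvec xpredT i) => //; apply: cutset_col.
exists 1 => _ [x x_cut <-]; rewrite qform_QG.
apply: (le_trans (cutform_le_sqnorm e_sym e_deg3 _)); rewrite sqnorm_cutr //.
by move=> i; case: (x_cut i) => ->; rewrite ?sqrrN.
Qed.

Lemma cutform_le_MaxCut s : cutform e (cutvec s) <= MaxCut R e.
Proof.
rewrite -col_cutvec -qform_QG; apply: (sup_upper_bound MaxCut_has_sup).
by exists (\col_i cutvec s i) => //; apply: cutset_col.
Qed.

(* A uniformly random cut cuts half of the edges: MaxCut(G) >= 1/2. *)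
Lemma MaxCut_ge_half : 2^-1 <= MaxCut R e.
Proof.
have avg : \sum_(s : {ffun 'I_n -> bool}) cutform e (cutvec s) =
    \sum_(s : {ffun 'I_n -> bool}) 2^-1.
  rewrite (eq_bigr (fun s : {ffun 'I_n -> bool} =>
      2^-1 - 6^-1 * bilin e (cutvec s) (cutvec s))); last first.
    by move=> s _; rewrite /cutform sqnorm_cutvec mulr1.
  by rewrite sumrB -mulr_sumr bilin_sgn_avg // mulr0 subr0.
have : \sum_(s : {ffun 'I_n -> bool}) cutform e (cutvec s) <=
       \sum_(s : {ffun 'I_n -> bool}) MaxCut R e.
  by apply: ler_sum => s _; apply: cutform_le_MaxCut.
rewrite avg !sumr_const lerMn2r => /orP[|//].
by move=> /eqP/card0_eq/(_ [ffun=> true]); rewrite !inE.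
Qed.

Section UnitVector.
Variable u : 'I_n -> R.
Hypothesis u_unit : sqnorm u = 1.

Let z := cutvec (fun i => 0 <= u i).
Let w i := u i - z i.
Let t := sqnorm w.

Lemma dist_sign_cut : t = 2 - 2 * cutr * \sum_i `|u i|.
Proof.
rewrite /t /sqnorm (eq_bigr (fun i => u i ^+ 2 - 2 * cutr * `|u i| + cutr ^+ 2)).
  rewrite !big_split /= sumr_const card_ord sumrN -[_ *+ n]mulr_natl n_cutr_sqr -mulr_sumr.
  by have := u_unit; rewrite /sqnorm => ->; ring.
move=> i _; rewrite /w /z /cutvec /sgn; case: ifP => [u_ge0|/negbT].
  by rewrite ger0_norm //; ring.
by rewrite -ltNge => u_lt0; rewrite ltr0_norm //; ring.
Qed.

Lemma weight_le_expR (k : nat) : weight k u <= expR (- (k%:R * n%:R * t)).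
Proof.
set f := fun i => Num.sqrt (n%:R : R) * `|u i|.
rewrite /weight (eq_bigr (fun i => (f i ^+ 2) ^+ k)); last first.
  by move=> i _; congr (_ ^+ k); rewrite /f /= exprMn sqr_sqrtr ?ler0n // real_normK ?num_real.
apply: (@le_trans _ _ (\prod_i expR (k%:R * (2 * (f i - 1))))).
  apply: ler_prod => i _; rewrite exprn_ge0 ?sqr_ge0 //=.
  by apply: sqr_pow_le_expR; rewrite mulr_ge0 ?sqrtr_ge0.
rewrite -expR_sum -!mulr_sumr sumrB sumr_const card_ord -mulr_sumr -n_cutr.
by rewrite dist_sign_cut -mulr_natr le_eqVlt; apply/predU1l; congr expR; ring.
Qed.

Lemma weight_ge0 (k : nat) : 0 <= weight k u.
Proof. by apply: prodr_ge0 => i _; apply: exprn_ge0; rewrite mulr_ge0 ?ler0n ?sqr_ge0. Qed.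

Lemma pG_near_cut (k : nat) (c : R) : 0 < c -> t <= c ^+ 2 ->
  cutform e u * weight k u <= MaxCut R e + 2 * c + c ^+ 2.
Proof.
move=> c_gt0 t_le.
have weight_le1 : weight k u <= 1.
  apply: (le_trans (weight_le_expR k)); rewrite expR_le1 oppr_le0.
  by rewrite !mulr_ge0 ?ler0n ?sqnorm_ge0.
apply: (le_trans (ler_piMr (cutform_ge0 e_sym e_deg3 u) weight_le1)).
have -> : u = (fun i => z i + w i) by apply/funext => i; rewrite /w addrC subrK.
have := cutform_perturb e_sym e_deg3 z w c_gt0; rewrite sqnorm_cutvec mulr1 -/t.
have : c^-1 * t <= c by rewrite ler_pdivrMl // -expr2.
have := cutform_le_MaxCut (fun i => 0 <= u i); rewrite -/z; lra.
Qed.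

(* Far from every cut, the weight is at most 1/2 once k t >= 1. *)
Lemma pG_far_cut (k : nat) : 1 <= k%:R * t ->
  cutform e u * weight k u <= MaxCut R e.
Proof.
move=> kt_ge1; have weight_le_half : weight k u <= 2^-1.
  apply: (le_trans (weight_le_expR k)); apply: expRN_le_half.
  apply: (le_trans kt_ge1); rewrite mulrAC ler_peMr ?mulr_ge0 ?ler0n ?sqnorm_ge0 //.
  by rewrite ler1n.
have := cutform_le_sqnorm e_sym e_deg3 u; have := cutform_ge0 e_sym e_deg3 u.
have := weight_ge0 k; have := MaxCut_ge_half; rewrite u_unit; nra.
Qed.

Lemma pG_le_MaxCut (k : nat) (c : R) : 0 < c -> 1 <= k%:R * c ^+ 2 ->
  cutform e u * weight k u <= MaxCut R e + 2 * c + c ^+ 2.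
Proof.
move=> c_gt0 kc_ge1; case: (lerP t (c ^+ 2)) => [t_le|t_gt]; first exact: pG_near_cut.
have := MaxCut_ge_half; have : 1 <= k%:R * t.
  by apply: (le_trans kc_ge1); rewrite ler_wpM2l ?ler0n ?ltW.
move=> /pG_far_cut; nra.
Qed.

End UnitVector.

Lemma Opt_le_MaxCut (k : nat) (c : R) : 0 < c -> 1 <= k%:R * c ^+ 2 ->
  Opt R k e <= MaxCut R e + 2 * c + c ^+ 2.
Proof.
move=> c_gt0 kc_ge1; apply: ge_sup.
  exists (pG k e (\col_i cutvec xpredT i)), (\col_i cutvec xpredT i) => //.
  by rewrite -(sqnorm_cutvec xpredT); apply: eq_bigr => i _; rewrite mxE.
move=> _ [x x_unit <-]; rewrite pG_cutform; exact: pG_le_MaxCut.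
Qed.

End MaxCutBounds.

Theorem mainTheorem19 :
  exists C : nat, forall (R : realType) (k : nat), (C <= k)%N ->
    forall (n : nat) (e : rel 'I_n), (0 < n)%N -> three_regular e ->
      Opt R k e < (332%:R / 331%:R) * MaxCut R e.
Proof.
exists (4096 ^ 2)%N => R k k_ge n e n_gt0 e_reg.
set c : R := (4096%:R)^-1.
have c_gt0 : 0 < c by rewrite invr_gt0 ltr0n.
have c4096 : c * 4096%:R = 1 by rewrite mulVf // pnatr_eq0.
have kc_ge1 : 1 <= k%:R * c ^+ 2.
  have one : 1 = (4096 ^ 2)%:R * c ^+ 2 :> R by rewrite natrX -exprMn mulrC c4096 expr1n.
  by rewrite [leLHS]one ler_pM2r ?exprn_gt0 ?ler_nat.
have := Opt_le_MaxCut e_reg n_gt0 c_gt0 kc_ge1; have := MaxCut_ge_half R e_reg n_gt0.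
have : c ^+ 2 <= c by rewrite expr2 ler_piMl ?ltW //; nra.
lra.
Qed.
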